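(* Let $B$ be a finite block size, $c\ge1$ an integer, $\gamma\in(0,1]$, and $k,k'$ positive integers with $k+k'=B$ and $1\le k'\le\lfloor \gamma k/c\rfloor$. The burning second-price auction with parameters $(B,c,\gamma,k,k')$ satisfies UIC, MIC and $c$-SCP under $\gamma$-strict utility.
   Context: Setting (TFM). Users $i$ have true values $v_i\ge0$ and submit single bids $b_i\ge0$. A block holds at most $B$ transactions. A TFM has an inclusion rule (run by the miner, selecting at most $B$ bids), and confirmation, payment and miner-revenue rules (run by the blockchain on the included bids, possibly using trusted on-chain randomness revealed after inclusion); confirmed bids pay at most their bid, unconfirmed bids pay $0$, the miner receives at most the total payment and the rest is burnt. Burning second-price auction with parameters $(B,c,\gamma,k,k')$: Inclusion: include the $B$ highest bids (ties broken arbitrarily), denoted $b_1\ge\dots\ge b_B$; empty slots count as bids of $0$. Confirmation: using on-chain randomness choose a uniformly random subset $S\subseteq\{b_1,\dots,b_k\}$ of size exactly $\lfloor\gamma k/c\rfloor$; exactly the bids in $S$ are confirmed. Payment: each confirmed bid pays $b_{k+1}$. Miner revenue: $\gamma(b_{k+1}+\dots+b_{k+k'})$; remaining payment is burnt. Strategic players: a single user, the miner, or a coalition of the miner with some users. They may have their users bid untruthfully after seeing all other bids, inject fake bids (true value $0$), and, if the miner is involved, include any set of at most $B$ available bids instead of following the inclusion rule. $\gamma$-strict utility of a player: the miner's revenue (if the miner belongs to the player), plus $v-p$ for each confirmed transaction of the player with true value $v$ and payment $p$, minus $\gamma(b-v)$ for each unconfirmed transaction of the player whose bid $b$ exceeds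 its true value $v$; expected utilities are used. Under $\gamma$-strict utility: UIC — assuming the miner follows the mechanism, each user's expected utility is maximized by truthful bidding without fake bids, whatever the other bids; MIC — the miner's expected utility is maximized by following the inclusion rule without fake bids, whatever the bids; $c$-SCP — for every coalition of the miner with between $1$ and $c$ users, expected joint utility is maximized by truthful bidding and honest miner behavior, whatever the other bids. *)

From mathcomp Require Import all_boot all_order all_algebra.
From mathcomp Require Import reals.
Unset Printing Implicit Defensive.
Import Order.TTheory GRing.Theory Num.Theory.
Local Open Scope ring_scope.

Section TFM.
Variable R : realType.

(* A transaction: (bid, owner).  owner = None: belongs to someone outside the
   strategic player; owner = Some v: belongs to the strategic player and has
   true value v (fake bids have true value 0). *)
Definition tx := (R * option R)%type.
Definition bidOf (t : tx) : R := t.1.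
Definition tx0 : tx := (0, None).

Definition others_txs (os : seq R) : seq tx := [seq (b, None) | b <- os].

(* vs = true values of the player's real users, bs = their (single) bids,
   fs = injected fake bids (true value 0). *)
Definition player_txs (vs bs fs : seq R) : seq tx :=
  [seq (p.2, Some p.1) | p <- zip vs bs] ++ [seq (f, Some 0) | f <- fs].

Definition all_nonneg (s : seq R) : Prop := forall x, x \in s -> 0 <= x.

Definition valid_block (B : nat) (av I : seq tx) : Prop :=
  exists rest, perm_eq (I ++ rest) av /\ (size I <= B)%N.

Definition honest_inclusion (B : nat) (av I : seq tx) : Prop :=
  exists rest, perm_eq (I ++ rest) av /\ size I = minn B (size av) /\
    (forall x y, x \in I -> y \in rest -> bidOf y <= bidOf x).

Definition arrangement (I L : seq tx) : Prop :=
  perm_eq L I /\ sorted (fun x y : tx => bidOf y <= bidOf x) L.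

(* bid at 0-indexed position i of the block; empty slots count as 0.
   So b_{j} (1-indexed) is bidAt L (j-1). *)
Definition bidAt (L : seq tx) (i : nat) : R := nth 0 (map bidOf L) i.

Definition nconf (c k : nat) (g : R) : nat := Num.truncn (g * k%:R / c%:R).

Definition tx_util (k : nat) (g : R) (L : seq tx) (conf : nat -> bool)
  (i : nat) (t : tx) : R :=
  match t.2 with
  | None => 0
  | Some v => if conf i then v - bidAt L k
              else if v < t.1 then - (g * (t.1 - v)) else 0
  end.

Definition realized_util (miner : bool) (k k' : nat) (g : R) (L : seq tx)
  (S : {set 'I_k}) : R :=
  (if miner then g * \sum_(k <= i < (k + k')%N) bidAt L i else 0) +
  \sum_(i < size L)
     tx_util k g L (fun j => [exists s in S, nat_of_ord s == j]) i (nth tx0 L i).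

Definition conf_sets (k m : nat) : {set {set 'I_k}} := [set S : {set 'I_k} | #|S| == m].

Definition exp_util (miner : bool) (c k k' : nat) (g : R) (L : seq tx) : R :=
  (\sum_(S in conf_sets k (nconf c k g)) realized_util miner k k' g L S)
    / (#|conf_sets k (nconf c k g)|)%:R.

Definition UIC (B c k k' : nat) (g : R) : Prop :=
  forall (os : seq R) (v b : R) (fs : seq R),
    all_nonneg os -> 0 <= v -> 0 <= b -> all_nonneg fs ->
    forall I L I' L',
      honest_inclusion B (others_txs os ++ player_txs [:: v] [:: v] [::]) I ->
      arrangement I L ->
      honest_inclusion B (others_txs os ++ player_txs [:: v] [:: b] fs) I' ->
      arrangement I' L' ->
      exp_util false c k k' g L' <= exp_util false c k k' g L.

Definition MIC (B c k k' : nat) (g : R) : Prop :=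
  forall (os fs : seq R),
    all_nonneg os -> all_nonneg fs ->
    forall I L I' L',
      honest_inclusion B (others_txs os) I -> arrangement I L ->
      valid_block B (others_txs os ++ player_txs [::] [::] fs) I' ->
      arrangement I' L' ->
      exp_util true c k k' g L' <= exp_util true c k k' g L.

Definition SCP (B c k k' : nat) (g : R) : Prop :=
  forall (vs os bs fs : seq R),
    (1 <= size vs <= c)%N -> all_nonneg vs -> all_nonneg os ->
    size bs = size vs -> all_nonneg bs -> all_nonneg fs ->
    forall I L I' L',
      honest_inclusion B (others_txs os ++ player_txs vs vs [::]) I ->
      arrangement I L ->
      valid_block B (others_txs os ++ player_txs vs bs fs) I' ->
      arrangement I' L' ->
      exp_util true c k k' g L' <= exp_util true c k k' g L.

End TFM.

From mathcomp Require Import all_boot all_order all_algebra all_fingroup.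
From mathcomp Require Import reals.
From mathcomp Require Import ring lra.
Import Order.TTheory GRing.Theory Num.Theory.
Local Open Scope ring_scope.

(* Averaging over the random confirmed set, each of the first k slots is confirmed
   with probability p = floor(gamma k / c) / k, so expected utility is a sum of
   per-slot terms.  Honestly, a user of value v gets p (v - X)^+ with X = b_{k+1},
   and the miner gets gamma (b_{k+1} + ... + b_{k+k'}).  After a deviation with
   price x = b'_{k+1}, a slot is worth at most gamma min(x, value) to the coalition,
   less gamma x in the first k slots, plus the user surplus p (v - x)^+.  The top
   k + k' values of min(x, .) cannot beat those of the honest block, so the miner
   loses at least gamma (X - x)^+ at slot k + 1, while at most c users gain at most
   p c (X - x)^+ <= gamma (X - x)^+.  A lone user profits from x < X only from the
   first k slots, and these are filled by the k outsiders bidding at least X. *)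

(* Double counting: by the symmetry [tperm i j], every position lies in the same
   number of [m]-subsets of ['I_k], and each subset has [m] elements. *)
Lemma conf_sets_count_mem (k m : nat) (i : 'I_k) :
  (k * \sum_(S in conf_sets k m) (i \in S))%N = (m * #|conf_sets k m|)%N.
Proof.
have count_sym (j : 'I_k) : (\sum_(S in conf_sets k m) (j \in S))%N =
                            (\sum_(S in conf_sets k m) (i \in S))%N.
  have inj_pre : injective (fun S : {set 'I_k} => tperm i j @^-1: S).
    move=> S1 S2 /= /setP eS; apply/setP=> x.
    by have := eS (tperm i j x); rewrite !inE tpermK.
  rewrite (reindex_inj inj_pre) /=; apply: eq_big => S.
    by rewrite !inE card_preimset //; apply: perm_inj.
  by move=> _; rewrite !inE tpermR.
have -> : (k * \sum_(S in conf_sets k m) (i \in S))%N =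
    (\sum_(j < k) \sum_(S in conf_sets k m) (j \in S))%N.
  by rewrite (eq_bigr _ (fun j _ => count_sym j)) sum_nat_const card_ord.
rewrite exchange_big /= mulnC -sum_nat_const; apply: eq_bigr => S.
by rewrite inE => /eqP <-; rewrite -sum1_card [RHS]big_mkcond.
Qed.

Section Sums.
Context {R : realDomainType}.

Lemma ler_sum_perm_cat {T : eqType} {s1 s2 s : seq T} (F : T -> R) :
  perm_eq (s1 ++ s2) s -> (forall t, t \in s2 -> 0 <= F t) ->
  \sum_(t <- s1) F t <= \sum_(t <- s) F t.
Proof.
move=> perm_s F_ge0; rewrite -(perm_big _ perm_s) big_cat /= lerDl big_seq.
exact: sumr_ge0.
Qed.

Lemma sum_nat_cond_minn (f : nat -> R) n a :
  \sum_(0 <= i < n) (if (i < a)%N then f i else 0) = \sum_(0 <= i < minn n a) f i.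
Proof.
rewrite -big_mkcond; case: (leqP n a) => [na | an].
  rewrite big_nat_cond [RHS]big_nat_cond; apply: eq_bigl => i.
  case: (ltnP i a) => [_ | le_ai]; first by rewrite !andbT.
  by rewrite andbF andbT ltnNge (leq_trans na le_ai) andbF.
by rewrite (big_nat_widen _ _ _ _ _ (ltnW an)).
Qed.

Lemma sum_nat_window (f : nat -> R) a b n : (forall i, (n <= i)%N -> f i = 0) ->
  \sum_(a <= i < b) f i = \sum_(0 <= i < n) (if (a <= i < b)%N then f i else 0).
Proof.
move=> f_eq0; rewrite -big_mkcond /=.
rewrite (big_nat_widenl _ 0) // (big_nat_widen _ _ (n + b)) ?leq_addl //.
rewrite (big_cat_nat (leq0n n) (leq_addr b n)) /= [X in _ + X]big1_seq ?addr0 //.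
by move=> i /andP [_]; rewrite mem_index_iota => /andP [/f_eq0].
Qed.

Lemma sum_nat_trunc {f : nat -> R} {n N} : (n <= N)%N ->
  (forall i, (n <= i)%N -> f i = 0) -> \sum_(0 <= i < N) f i = \sum_(0 <= i < n) f i.
Proof.
move=> nN f_eq0; rewrite (big_cat_nat (leq0n n) nN) /= [X in _ + X]big1_seq ?addr0 //.
by move=> i /andP [_]; rewrite mem_index_iota => /andP [/f_eq0].
Qed.

Lemma max_subr_le (v x y : R) :
  Num.max (v - x) 0 <= Num.max (v - y) 0 + Num.max (y - x) 0.
Proof.
rewrite ge_max addr_ge0 ?le_max ?lexx ?orbT // andbT.
have -> : v - x = (v - y) + (y - x) by rewrite addrA subrK.
by apply: lerD; rewrite le_max lexx.
Qed.

Lemma sum_min_le_shift (f : nat -> R) x a b : (a < b)%N ->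
  \sum_(a <= j < b) Num.min x (f j) <= \sum_(a <= j < b) f j - Num.max (f a - x) 0.
Proof.
move=> lt_ab; rewrite !(big_ltn lt_ab) addrAC; apply: lerD.
  case: (leP x (f a)) => [le_xf | lt_fx].
    have -> : Num.max (f a - x) 0 = f a - x by apply/max_idPl; rewrite subr_ge0.
    by rewrite opprB addrCA subrr addr0.
  have -> : Num.max (f a - x) 0 = 0 by apply/max_idPr; rewrite subr_le0 ltW.
  by rewrite subr0.
by apply: ler_sum => j _; rewrite ge_min lexx orbT.
Qed.

End Sums.

Section ExpectedUtility.
Variable R : realType.
Variables (c k k' : nat) (g : R).
Hypothesis k_gt0 : (0 < k)%N.
Hypothesis nconf_le : (nconf R c k g <= k)%N.

Local Notation m := (nconf R c k g).
Local Notation N := #|conf_sets k m|.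

Definition conf_prob : R := m%:R / k%:R.

Definition exp_tx_util (L : seq (tx R)) (i : nat) (t : tx R) : R :=
  if (i < k)%N then conf_prob * tx_util R k g L xpredT i t
                    + (1 - conf_prob) * tx_util R k g L xpred0 i t
  else tx_util R k g L xpred0 i t.

Lemma conf_prob_ge0 : 0 <= conf_prob.
Proof. by rewrite divr_ge0 ?ler0n. Qed.

Lemma conf_prob_le1 : conf_prob <= 1.
Proof. by rewrite ler_pdivrMr ?mul1r ?ler_nat ?ltr0n. Qed.

Lemma card_conf_sets_gt0 : (0 < N)%N.
Proof. by rewrite card_draws card_ord bin_gt0. Qed.

Lemma sum_conf_sets_if (i : nat) (x y : R) :
  \sum_(S in conf_sets k m) (if [exists s in S, nat_of_ord s == i] then x else y) =
  N%:R * (if (i < k)%N then conf_prob * x + (1 - conf_prob) * y else y).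
Proof.
case: ltnP => [lt_ik | le_ki]; last first.
  rewrite (eq_bigr (fun _ => y)) ?sumr_const ?mulr_natl // => S _.
  by case: existsP => // -[s /andP [_ /eqP si]]; move: (ltn_ord s); rewrite si ltnNge le_ki.
pose j := Ordinal lt_ik.
have memj (S : {set 'I_k}) : [exists s in S, nat_of_ord s == i] = (j \in S).
  apply/existsP/idP => [[s /andP [sS /eqP si]] | jS]; last by exists j; rewrite jS /=.
  by have -> : j = s by apply: val_inj.
have count_j : (\sum_(S in conf_sets k m) (j \in S))%:R = conf_prob * N%:R :> R.
  have k0 : k%:R != 0 :> R by rewrite pnatr_eq0 -lt0n.
  apply: (mulfI k0); rewrite -natrM conf_sets_count_mem natrM /conf_prob.
  by field.
under eq_bigr => S _ do rewrite memj.
rewrite (eq_bigr (fun S : {set 'I_k} => y + (j \in S : nat)%:R * (x - y))); last first.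
  by move=> S _; case: (j \in S); rewrite /= ?mul1r ?mul0r ?addr0 // addrC subrK.
rewrite big_split /= sumr_const -mulr_suml -natr_sum count_j -mulr_natl.
ring.
Qed.

Lemma tx_util_conf L (conf : nat -> bool) i t :
  tx_util R k g L conf i t =
  if conf i then tx_util R k g L xpredT i t else tx_util R k g L xpred0 i t.
Proof. by rewrite /tx_util; case: t.2 => [v|]; case: (conf i). Qed.

Lemma exp_utilE miner L :
  exp_util R miner c k k' g L =
  (if miner then g * \sum_(k <= i < k + k') bidAt R L i else 0) +
  \sum_(0 <= i < size L) exp_tx_util L i (nth (tx0 R) L i).
Proof.
have N0 : N%:R != 0 :> R by rewrite pnatr_eq0 -lt0n card_conf_sets_gt0.
rewrite /exp_util /realized_util big_split /= sumr_const mulrDl -[_ *+ N]mulr_natr mulfK //.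
rewrite exchange_big /= big_mkord mulr_suml; congr (_ + _); apply: eq_bigr => i _.
under eq_bigr => S _ do rewrite tx_util_conf.
by rewrite sum_conf_sets_if mulrC mulKf.
Qed.

End ExpectedUtility.

Lemma nconf_le_scaled {R : realType} {c} k {g : R} : (1 <= c)%N -> 0 <= g ->
  (nconf R c k g)%:R <= g * k%:R / c%:R.
Proof. by move=> c_ge1 g_ge0; rewrite truncn_le divr_ge0 ?mulr_ge0. Qed.

Lemma nconf_le_k {R : realType} {c} k {g : R} : (1 <= c)%N -> 0 <= g -> g <= 1 ->
  (nconf R c k g <= k)%N.
Proof.
move=> c_ge1 g_ge0 g_le1; rewrite -(ler_nat R).
apply: le_trans (nconf_le_scaled k c_ge1 g_ge0) _; rewrite ler_pdivrMr ?ltr0n //.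
by rewrite [X in _ <= X]mulrC ler_pM ?ler0n // (le_trans g_le1) ?ler1n.
Qed.

Lemma conf_prob_mulr_le {R : realType} {c k} {g : R} : (1 <= c)%N -> (0 < k)%N -> 0 <= g ->
  conf_prob R c k g * c%:R <= g.
Proof.
move=> c_ge1 k_gt0 g_ge0; rewrite /conf_prob mulrAC ler_pdivrMr ?ltr0n //.
by rewrite -ler_pdivlMr ?ltr0n // nconf_le_scaled.
Qed.

Lemma zip_diag (T : Type) (s : seq T) : zip s s = [seq (x, x) | x <- s].
Proof. by elim: s => //= x s ->. Qed.

Lemma sum_zip_fst {V : nmodType} {T1 T2 : Type} (G : T1 -> V) (s1 : seq T1) (s2 : seq T2) :
  size s2 = size s1 -> \sum_(p <- zip s1 s2) G p.1 = \sum_(x <- s1) G x.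
Proof. by move=> eq_sz; rewrite -[in RHS](@unzip1_zip _ _ s1 s2) ?eq_sz // big_map. Qed.

Lemma mem_zip_snd {T1 T2 : eqType} {s1 : seq T1} {s2 : seq T2} {p} :
  size s1 = size s2 -> p \in zip s1 s2 -> p.2 \in s2.
Proof. by move=> eq_sz /(map_f snd); rewrite -/(unzip2 _) unzip2_zip // eq_sz. Qed.

Section Blocks.
Context {R : realType}.
Implicit Types (L I : seq (tx R)) (t : tx R) (vs os bs fs : seq R).
Local Notation tx0 := (tx0 R).
Local Notation bidOf := (bidOf R).
Local Notation bidAt := (bidAt R).

Definition worth t : R := if t.2 is Some v then v else t.1.

Definition own_surplus (x : R) t : R := if t.2 is Some v then Num.max (v - x) 0 else 0.

Definition truthful_txs vs os := others_txs R os ++ player_txs R vs vs [::].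

Lemma own_surplus_ge0 x t : 0 <= own_surplus x t.
Proof. by rewrite /own_surplus; case: t.2 => // v; rewrite le_max lexx orbT. Qed.

Lemma bidAt_nth {L i} : (i < size L)%N -> bidAt L i = bidOf (nth tx0 L i).
Proof. by move=> lt_iL; rewrite /bidAt (nth_map tx0). Qed.

Lemma bidAt_default {L i} : (size L <= i)%N -> bidAt L i = 0.
Proof. by move=> le_Li; rewrite /bidAt nth_default ?size_map. Qed.

Lemma bidAt_ge0 L i : {in L, forall t, 0 <= bidOf t} -> 0 <= bidAt L i.
Proof.
move=> L_ge0; case: (ltnP i (size L)) => [lt_iL | le_Li]; last by rewrite bidAt_default.
by rewrite bidAt_nth // L_ge0 // mem_nth.
Qed.

Lemma arrangement_bidAt_le {I L} : arrangement R I L -> {in L, forall t, 0 <= bidOf t} ->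
  forall i j, (i <= j)%N -> bidAt L j <= bidAt L i.
Proof.
move=> [_ sorted_L] L_ge0 i j le_ij.
case: (ltnP j (size L)) => [lt_jL | le_Lj]; last by rewrite bidAt_default ?bidAt_ge0.
rewrite !bidAt_nth ?(leq_ltn_trans le_ij lt_jL) //.
have le_tr : transitive (fun x y : tx R => bidOf y <= bidOf x).
  by move=> y x z /= h1 h2; exact: le_trans h2 h1.
apply: (sorted_leq_nth le_tr (fun t => lexx (bidOf t)) tx0 sorted_L) => //.
by rewrite inE (leq_ltn_trans le_ij).
Qed.

Lemma arrangement_mem {I L av rest t} : arrangement R I L -> perm_eq (I ++ rest) av ->
  t \in L -> t \in av.
Proof.
by move=> [perm_L _] perm_av tL; rewrite -(perm_mem perm_av) mem_cat -(perm_mem perm_L) tL.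
Qed.

Lemma truthful_txsP {vs os t} : all_nonneg R vs -> all_nonneg R os ->
  t \in truthful_txs vs os -> 0 <= t.1 /\ (t.2 = None \/ t.2 = Some t.1).
Proof.
move=> vs_ge0 os_ge0; rewrite mem_cat => /orP [/mapP [b b_os ->] | ].
  by split; [exact: os_ge0 | left].
rewrite /player_txs cats0 zip_diag -map_comp => /mapP [v v_vs ->].
by split; [exact: vs_ge0 | right].
Qed.

Lemma deviation_bid_ge0 vs os bs fs t :
  all_nonneg R os -> all_nonneg R bs -> all_nonneg R fs -> size bs = size vs ->
  t \in others_txs R os ++ player_txs R vs bs fs -> 0 <= bidOf t.
Proof.
move=> os_ge0 bs_ge0 fs_ge0 eq_sz; rewrite !mem_cat => /or3P [] /mapP [p p_in ->] //=.
- exact: os_ge0.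
- exact: bs_ge0 (mem_zip_snd (esym eq_sz) p_in).
- exact: fs_ge0.
Qed.

Lemma sum_player_txs (F : tx R -> R) vs bs fs :
  \sum_(t <- player_txs R vs bs fs) F t =
  \sum_(p <- zip vs bs) F (p.2, Some p.1) + \sum_(f <- fs) F (f, Some 0).
Proof. by rewrite /player_txs big_cat !big_map. Qed.

Lemma honest_inclusion_excluded {B av I L j} :
  honest_inclusion R B av I -> arrangement R I L -> (j < B)%N ->
  exists2 rest, perm_eq (I ++ rest) av & {in rest, forall r, bidOf r <= bidAt L j}.
Proof.
move=> [rest [perm_av [size_I sep]]] [perm_L _] lt_jB; exists rest => // r r_rest.
have full : size I = B.
  move: size_I; rewrite -(perm_size perm_av) size_cat.
  case: rest r_rest {perm_av sep} => // r' rest _ /=.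
  by rewrite /minn; case: ltnP => // _ /eqP; rewrite -{1}[size I]addn0 eqn_add2l.
have lt_jL : (j < size L)%N by rewrite (perm_size perm_L) full.
by rewrite bidAt_nth // sep // -(perm_mem perm_L) mem_nth.
Qed.

Lemma honest_block_sum (F : tx R -> R) {B av I L j} :
  honest_inclusion R B av I -> arrangement R I L -> (j < B)%N ->
  (forall t, t \in av -> bidOf t <= bidAt L j -> F t = 0) ->
  \sum_(t <- L) F t = \sum_(t <- av) F t.
Proof.
move=> incl arr lt_jB F_eq0; have [perm_L _] := arr.
have [rest perm_av rest_le] := honest_inclusion_excluded incl arr lt_jB.
rewrite -(perm_big _ perm_av) big_cat /= (perm_big _ perm_L) [X in _ + X]big1_seq ?addr0 //.
move=> r /andP [_ r_rest]; apply: F_eq0; last exact: rest_le.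
by rewrite -(perm_mem perm_av) mem_cat r_rest orbT.
Qed.

Lemma honest_count_above (P : pred (tx R)) {B av I L j} :
  honest_inclusion R B av I -> arrangement R I L -> {in L, forall t, 0 <= bidOf t} ->
  (j < B)%N -> (forall t, P t -> bidAt L j < bidOf t) ->
  count P av = count P (take j L).
Proof.
move=> incl arr L_ge0 lt_jB P_above; have [perm_L _] := arr.
have [rest perm_av rest_le] := honest_inclusion_excluded incl arr lt_jB.
have notP_le t : bidOf t <= bidAt L j -> ~~ P t.
  by move=> le_tj; apply/negP => /P_above; rewrite ltNge le_tj.
have count_rest : count P rest = 0%N.
  by apply/eqP; rewrite -leqn0 leqNgt -has_count; apply/hasPn => r /rest_le /notP_le.
have count_drop : count P (drop j L) = 0%N.
  apply/eqP; rewrite -leqn0 leqNgt -has_count; apply/hasPn => t /(nthP tx0) [i lt_i <-].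
  rewrite nth_drop notP_le // -bidAt_nth; last by rewrite -ltn_subRL -size_drop.
  by apply: (arrangement_bidAt_le arr L_ge0); rewrite leq_addr.
rewrite -(seq.permP perm_av P) count_cat count_rest addn0 -(seq.permP perm_L P).
by rewrite -{1}(cat_take_drop j L) count_cat count_drop addn0.
Qed.

Lemma sum_worth_deviation (G : R -> R) vs os bs fs : size bs = size vs -> G 0 = 0 ->
  \sum_(t <- others_txs R os ++ player_txs R vs bs fs) G (worth t) =
  \sum_(t <- truthful_txs vs os) G (worth t).
Proof.
move=> eq_sz G0; rewrite /truthful_txs big_cat sum_player_txs [RHS]big_cat sum_player_txs.
rewrite big_nil [\sum_(f <- fs) _]big1 // /= !addr0.
by rewrite (sum_zip_fst (fun v => G v)) // (sum_zip_fst (fun v => G v)).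
Qed.

Lemma sum_own_surplus_deviation x vs os bs fs : 0 <= x -> size bs = size vs ->
  \sum_(t <- others_txs R os ++ player_txs R vs bs fs) own_surplus x t =
  \sum_(v <- vs) Num.max (v - x) 0.
Proof.
move=> x_ge0 eq_sz; rewrite big_cat sum_player_txs /= big_map big1 // add0r.
rewrite [X in _ + X]big1 ?addr0 ?(sum_zip_fst (fun v => Num.max (v - x) 0)) // => f _.
by rewrite /own_surplus /= sub0r; apply/max_idPr; rewrite oppr_le0.
Qed.

Lemma worth_truthful {vs os t} : all_nonneg R vs -> all_nonneg R os ->
  t \in truthful_txs vs os -> worth t = bidOf t.
Proof.
by move=> vs_ge0 os_ge0 /(truthful_txsP vs_ge0 os_ge0) [_ [] eq_t]; rewrite /worth eq_t.
Qed.

Lemma honest_excess_sum {vs os B I L} x {M} :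
  all_nonneg R vs -> all_nonneg R os ->
  honest_inclusion R B (truthful_txs vs os) I -> arrangement R I L -> (M < B)%N ->
  let y := Num.min x (bidAt L M) in
  \sum_(t <- truthful_txs vs os) Num.max (Num.min x (worth t) - y) 0 =
  \sum_(0 <= j < M.+1) (Num.min x (bidAt L j) - y).
Proof.
move=> vs_ge0 os_ge0 incl arr lt_MB y.
have L_truthful t : t \in L -> t \in truthful_txs vs os.
  by have [rest [perm_av _]] := incl; exact: arrangement_mem arr perm_av.
have L_ge0 : {in L, forall t, 0 <= bidOf t}.
  by move=> t /L_truthful /(truthful_txsP vs_ge0 os_ge0) [].
have excess_eq0 j : bidAt L j <= bidAt L M -> Num.max (Num.min x (bidAt L j) - y) 0 = 0.
  by move=> le_jM; apply/max_idPr; rewrite subr_le0 le_min2.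
rewrite -(honest_block_sum _ incl arr lt_MB); last first.
  move=> t t_av le_t; rewrite (worth_truthful vs_ge0 os_ge0 t_av).
  by apply/max_idPr; rewrite subr_le0 le_min2.
have -> : \sum_(t <- L) Num.max (Num.min x (worth t) - y) 0 =
          \sum_(0 <= j < size L) Num.max (Num.min x (bidAt L j) - y) 0.
  rewrite (big_nth tx0); apply: eq_big_nat => j /andP [_ lt_jL].
  by rewrite bidAt_nth // (worth_truthful vs_ge0 os_ge0) // L_truthful // mem_nth.
rewrite -(sum_nat_trunc (leq_addr M.+1 (size L))) => [|j le_Lj]; last first.
  by rewrite excess_eq0 // bidAt_default // bidAt_ge0.
rewrite (sum_nat_trunc (leq_addl _ _)) => [|j lt_Mj]; last first.
  by apply: excess_eq0; apply: (arrangement_bidAt_le arr L_ge0); exact: ltnW.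
rewrite /=; apply: eq_big_nat => j /andP [_ lt_jM]; apply/max_idPl.
by rewrite subr_ge0 le_min2 // (arrangement_bidAt_le arr L_ge0).
Qed.

Lemma sum_top_worth_le {vs os bs fs B I L I' L' rest' x M} :
  all_nonneg R vs -> all_nonneg R os -> size bs = size vs ->
  honest_inclusion R B (truthful_txs vs os) I -> arrangement R I L ->
  perm_eq (I' ++ rest') (others_txs R os ++ player_txs R vs bs fs) -> perm_eq L' I' ->
  0 <= x -> (M <= size L')%N -> (M <= B)%N ->
  \sum_(0 <= i < M) Num.min x (worth (nth tx0 L' i)) <=
  \sum_(0 <= j < M) Num.min x (bidAt L j).
Proof.
move=> vs_ge0 os_ge0 eq_sz incl arr perm_av' perm_L' x_ge0.
case: M => [|M] le_ML' lt_MB; first by rewrite !big_geq.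
have L_ge0 : {in L, forall t, 0 <= bidOf t}.
  have [rest [perm_av _]] := incl.
  by move=> t /(arrangement_mem arr perm_av) /(truthful_txsP vs_ge0 os_ge0) [].
set y := Num.min x (bidAt L M).
have y_ge0 : 0 <= y by rewrite le_min x_ge0 bidAt_ge0.
pose G a := Num.max (Num.min x a - y) 0.
have G_ge0 a : 0 <= G a by rewrite le_max lexx orbT.
have min_le a : Num.min x a <= y + G a by rewrite -lerBlDl le_max lexx.
have top_le_dev : \sum_(0 <= i < M.+1) G (worth (nth tx0 L' i)) <=
                  \sum_(t <- others_txs R os ++ player_txs R vs bs fs) G (worth t).
  have -> : \sum_(0 <= i < M.+1) G (worth (nth tx0 L' i)) =
            \sum_(t <- take M.+1 L') G (worth t).
    rewrite (big_nth tx0) size_takel //; apply: eq_big_nat => i /andP [_ lt_iM].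
    by rewrite nth_take.
  have perm_take := perm_refl (take M.+1 L' ++ drop M.+1 L').
  apply: (le_trans (ler_sum_perm_cat _ perm_take (fun t _ => G_ge0 _))).
  by rewrite cat_take_drop (perm_big _ perm_L') (ler_sum_perm_cat _ perm_av').
apply: (le_trans (ler_sum _ (fun i _ => min_le _))).
rewrite big_split /= sumr_const_nat subn0.
apply: (le_trans (lerD (lexx _) top_le_dev)).
rewrite sum_worth_deviation //; last first.
  by rewrite /G min_r // sub0r; apply/max_idPr; rewrite oppr_le0.
rewrite (honest_excess_sum x vs_ge0 os_ge0 incl arr lt_MB) -/y.
by rewrite big_split /= sumrN sumr_const_nat subn0 addrCA subrr addr0.
Qed.

Lemma single_user_honest_count {os v B I L j} : all_nonneg R os -> 0 <= v ->
  honest_inclusion R B (truthful_txs [:: v] os) I -> arrangement R I L -> (j < size L)%N ->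
  (j <= count (fun z => bidAt L j <= z)%R os)%N.
Proof.
move=> os_ge0 v_ge0 [rest [perm_av _]] arr lt_jL.
have v_nonneg : all_nonneg R [:: v] by move=> z; rewrite inE => /eqP ->.
have L_ge0 : {in L, forall t, 0 <= bidOf t}.
  by move=> t /(arrangement_mem arr perm_av) /(truthful_txsP v_nonneg os_ge0) [].
pose above t := bidAt L j <= bidOf t.
have top_L : (j.+1 <= count above L)%N.
  have all_top : all above (take j.+1 L).
    apply/allP => t /(nthP tx0) [i]; rewrite size_takel // => lt_ij <-.
    rewrite nth_take // /above -bidAt_nth ?(leq_trans lt_ij) //.
    exact: (arrangement_bidAt_le arr L_ge0 i j lt_ij).
  rewrite -(cat_take_drop j.+1 L) count_cat; move: all_top; rewrite all_count => /eqP ->.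
  by rewrite size_takel // leq_addr.
have [perm_L _] := arr.
rewrite -(leq_add2r 1) addn1 (leq_trans top_L) // (seq.permP perm_L).
rewrite -(leq_add2r (count above rest)) -count_cat (seq.permP perm_av) count_cat.
rewrite /others_txs count_map /player_txs /= addn0 -addnA leq_add2l.
by rewrite (leq_trans _ (leq_addr _ _)) // leq_b1.
Qed.

Lemma single_user_threshold_le {os v b fs B I L I' L' j} :
  all_nonneg R os -> 0 <= v -> 0 <= b -> all_nonneg R fs -> (j < B)%N ->
  honest_inclusion R B (truthful_txs [:: v] os) I -> arrangement R I L ->
  honest_inclusion R B (others_txs R os ++ player_txs R [:: v] [:: b] fs) I' ->
  arrangement R I' L' ->
  has (fun t => 0 < own_surplus (bidAt L' j) t) (take j L') -> bidAt L j <= bidAt L' j.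
Proof.
move=> os_ge0 v_ge0 b_ge0 fs_ge0 lt_jB incl arr incl' arr' own_top.
have [rest [perm_av _]] := incl; have [rest' [perm_av' _]] := incl'.
have L'_ge0 : {in L', forall t, 0 <= bidOf t}.
  move=> t /(arrangement_mem arr' perm_av'); apply: deviation_bid_ge0 => //.
  by move=> z; rewrite inE => /eqP ->.
set x := bidAt L' j in own_top *; set X := bidAt L j.
rewrite leNgt; apply/negP => lt_xX.
have lt_jL : (j < size L)%N.
  rewrite ltnNge; apply/negP => le_Lj; move: lt_xX.
  by rewrite /X bidAt_default // ltNge bidAt_ge0.
pose P t := (t.2 == None) && (x < bidOf t).
have count_top : (j <= count P (take j L'))%N.
  rewrite -(honest_count_above P incl' arr' L'_ge0 lt_jB); last by move=> t /andP [].
  rewrite count_cat /others_txs count_map /player_txs count_cat !count_map /= add0n.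
  rewrite (leq_trans (single_user_honest_count os_ge0 v_ge0 incl arr lt_jL)) //.
  rewrite (leq_trans _ (leq_addr _ _)) //.
  by apply: sub_count => z /= le_Xz; exact: lt_le_trans lt_xX le_Xz.
have own_in_top : (0 < count (predC P) (take j L'))%N.
  rewrite -has_count; apply: sub_has own_top => t /=.
  by rewrite /P /own_surplus; case: t.2 => //=; rewrite ltxx.
have := leq_add count_top own_in_top; rewrite count_predC size_take_min addn1.
by rewrite ltnNge geq_minl.
Qed.

End Blocks.

Section Incentives.
Context {R : realType} {c k k' : nat} {g : R}.
Hypothesis k_gt0 : (0 < k)%N.
Hypothesis k'_gt0 : (0 < k')%N.
Hypothesis nconf_le : (nconf R c k g <= k)%N.

Local Notation tx0 := (tx0 R).
Local Notation bidOf := (bidOf R).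
Local Notation bidAt := (bidAt R).
Local Notation p := (conf_prob R c k g).
Local Notation exp_tx_util := (exp_tx_util R c k g).
Local Notation revenue L := (g * \sum_(k <= i < k + k') bidAt L i).

Lemma exp_tx_util_truthful L i t : t.2 = None \/ t.2 = Some t.1 ->
  ((i < k)%N -> bidAt L k <= bidOf t) -> ((k <= i)%N -> bidOf t <= bidAt L k) ->
  exp_tx_util L i t = p * own_surplus (bidAt L k) t.
Proof.
rewrite /exp_tx_util /bidOf /tx_util /own_surplus; case=> -> //=.
  by case: ifP; rewrite !mulr0 ?addr0.
rewrite ltxx mulr0 addr0; case: ltnP => [_ /(_ isT) | _ _ /(_ isT)].
  by rewrite -subr_ge0 => /max_idPl ->.
by rewrite -subr_le0 => /max_idPr ->; rewrite mulr0.
Qed.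

Lemma exp_util_honest miner {vs os I L} :
  all_nonneg R vs -> all_nonneg R os ->
  honest_inclusion R (k + k') (truthful_txs vs os) I -> arrangement R I L ->
  exp_util R miner c k k' g L =
  (if miner then revenue L else 0) + p * \sum_(v <- vs) Num.max (v - bidAt L k) 0.
Proof.
move=> vs_ge0 os_ge0 incl arr; have [rest [perm_av _]] := incl.
have L_truthful t : t \in L -> t \in truthful_txs vs os.
  exact: arrangement_mem arr perm_av.
have L_ge0 : {in L, forall t, 0 <= bidOf t}.
  by move=> t /L_truthful /(truthful_txsP vs_ge0 os_ge0) [].
have lt_kB : (k < k + k')%N by rewrite -{1}[k]addn0 ltn_add2l.
rewrite exp_utilE //; congr (_ + _).
have -> : \sum_(0 <= i < size L) exp_tx_util L i (nth tx0 L i) =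
          p * \sum_(t <- L) own_surplus (bidAt L k) t.
  rewrite (big_nth tx0) mulr_sumr; apply: eq_big_nat => i /andP [_ lt_iL].
  have [_ shape] := truthful_txsP vs_ge0 os_ge0 (L_truthful _ (mem_nth tx0 lt_iL)).
  by apply: exp_tx_util_truthful => // ik; rewrite -(bidAt_nth lt_iL);
    apply: (arrangement_bidAt_le arr L_ge0) => //; exact: ltnW.
rewrite (honest_block_sum _ incl arr lt_kB); last first.
  move=> t /(truthful_txsP vs_ge0 os_ge0) [_ [] eq_t le_t]; rewrite /own_surplus eq_t //.
  by apply/max_idPr; rewrite subr_le0.
by rewrite sum_own_surplus_deviation // bidAt_ge0.
Qed.

Hypothesis g_ge0 : 0 <= g.

Lemma exp_tx_util_le_surplus L i t :
  exp_tx_util L i t <= p * (if (i < k)%N then own_surplus (bidAt L k) t else 0).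
Proof.
rewrite /exp_tx_util /tx_util /own_surplus; set x := bidAt L k.
move: (conf_prob_ge0 R c k g) (conf_prob_le1 R c k g k_gt0 nconf_le).
move: (conf_prob R c k g) => p p_ge0 p_le1.
case: t => b [v|] /=; last by case: ifP; rewrite !mulr0 ?addr0.
have penalty_le0 : (if v < b then - (g * (b - v)) else 0) <= 0.
  by case: ltP => // lt_vb; rewrite oppr_le0 mulr_ge0 // subr_ge0 ltW.
case: ifP => _; last by rewrite mulr0.
rewrite -[X in _ <= X]addr0; apply: lerD; first by rewrite ler_wpM2l // le_max lexx.
by rewrite mulr_ge0_le0 // subr_ge0.
Qed.

Lemma single_user_deviation_le os v b fs I L I' L' :
  all_nonneg R os -> 0 <= v -> 0 <= b -> all_nonneg R fs ->
  honest_inclusion R (k + k') (truthful_txs [:: v] os) I -> arrangement R I L ->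
  honest_inclusion R (k + k') (others_txs R os ++ player_txs R [:: v] [:: b] fs) I' ->
  arrangement R I' L' ->
  exp_util R false c k k' g L' <= exp_util R false c k k' g L.
Proof.
move=> os_ge0 v_ge0 b_ge0 fs_ge0 incl arr incl' arr'.
have v_nonneg : all_nonneg R [:: v] by move=> z; rewrite inE => /eqP ->.
have lt_kB : (k < k + k')%N by rewrite -{1}[k]addn0 ltn_add2l.
rewrite (exp_util_honest false v_nonneg os_ge0 incl arr) exp_utilE //= !add0r.
rewrite big_cons big_nil addr0; set x := bidAt L' k; set X := bidAt L k.
apply: le_trans (ler_sum_nat (fun i _ => exp_tx_util_le_surplus L' i _)) _.
rewrite -mulr_sumr; apply: ler_wpM2l; first exact: conf_prob_ge0.
have [own_top | /hasPn no_top] := boolP (has (fun t => 0 < own_surplus x t) (take k L')).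
  have le_Xx :=
    single_user_threshold_le os_ge0 v_ge0 b_ge0 fs_ge0 lt_kB incl arr incl' arr' own_top.
  have [rest' [perm_av' _]] := incl'; have [perm_L' _] := arr'.
  apply: (@le_trans _ _ (\sum_(t <- L') own_surplus x t)).
    rewrite (big_nth tx0); apply: ler_sum_nat => i _.
    by case: ifP => _; rewrite ?own_surplus_ge0.
  rewrite (perm_big _ perm_L').
  apply: le_trans (ler_sum_perm_cat _ perm_av' (fun t _ => own_surplus_ge0 _ _)) _.
  have x_ge0 : 0 <= x.
    apply: bidAt_ge0 => t /(arrangement_mem arr' perm_av'); apply: deviation_bid_ge0 => //.
    by move=> z; rewrite inE => /eqP ->.
  rewrite sum_own_surplus_deviation // big_cons big_nil addr0.
  by apply: le_max2 => //; exact: lerB.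
rewrite big1_seq ?le_max ?lexx ?orbT // => i /andP [_]; case: ifP => // lt_ik.
rewrite mem_index_iota => /andP [_ lt_iL].
apply/eqP; rewrite eq_le own_surplus_ge0 andbT leNgt; apply: no_top.
by rewrite -(nth_take tx0 lt_ik) mem_nth // size_take_min leq_min lt_ik.
Qed.

Hypothesis g_le1 : g <= 1.

Lemma slot_util_le L i t :
  ((i < k)%N -> bidAt L k <= bidOf t) -> ((k <= i)%N -> bidOf t <= bidAt L k) ->
  g * (if (k <= i < k + k')%N then bidOf t else 0) + exp_tx_util L i t <=
  g * ((if (i < k + k')%N then Num.min (bidAt L k) (worth t) else 0) -
       (if (i < k)%N then bidAt L k else 0)) + p * own_surplus (bidAt L k) t.
Proof.
rewrite /exp_tx_util /tx_util /own_surplus /worth /bidOf; set x := bidAt L k.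
move: (conf_prob_ge0 R c k g) (conf_prob_le1 R c k g k_gt0 nconf_le).
move: (conf_prob R c k g) => p p_ge0 p_le1.
case: t => b [v|] /=; have [lt_ik | le_ki] := ltnP i k.
- move=> /(_ isT) le_xb _; rewrite ltn_addr //= mulr0 add0r.
  have [le_xv | lt_vx] := leP x v.
    have -> : Num.max (v - x) 0 = v - x by apply/max_idPl; rewrite subr_ge0.
    rewrite subrr mulr0 add0r; case: ifP => [lt_vb | _]; last lra.
    have : 0 <= (1 - p) * (g * (b - v)) by rewrite !mulr_ge0 ?subr_ge0 ?(ltW lt_vb).
    nra.
  have -> : Num.max (v - x) 0 = 0 by apply/max_idPr; rewrite subr_le0 ltW.
  rewrite (lt_le_trans lt_vx le_xb).
  have : 0 <= (1 - p) * g * (b - x) by rewrite !mulr_ge0 ?subr_ge0.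
  have : 0 <= p * (1 - g) * (x - v) by rewrite !mulr_ge0 ?subr_ge0 ?(ltW lt_vx).
  nra.
- move=> _ /(_ isT) le_bx; rewrite /= subr0.
  have ps_ge0 : 0 <= p * Num.max (v - x) 0 by rewrite mulr_ge0 // le_max lexx orbT.
  case: (ltP v b) => [lt_vb | le_bv].
    have : 0 <= g * (b - v) by rewrite mulr_ge0 // subr_ge0 ltW.
    case: ltnP => _ //=; last lra.
    by rewrite (min_r (ltW (lt_le_trans lt_vb le_bx))); lra.
  have : 0 <= g * (Num.min x v - b) by rewrite mulr_ge0 // subr_ge0 le_min le_bx.
  by case: ltnP => _ /=; lra.
- by move=> /(_ isT) le_xb _; rewrite ltn_addr //= (min_l le_xb); lra.
- move=> _ /(_ isT) le_bx; rewrite /= subr0 (min_r le_bx).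
  by case: ltnP => _; lra.
Qed.

Lemma sum_slot_util_le {I L} : arrangement R I L -> {in L, forall t, 0 <= bidOf t} ->
  \sum_(0 <= i < size L) (g * (if (k <= i < k + k')%N then bidAt L i else 0) +
                          exp_tx_util L i (nth tx0 L i)) <=
  g * (\sum_(0 <= i < size L)
         (if (i < k + k')%N then Num.min (bidAt L k) (worth (nth tx0 L i)) else 0) -
       \sum_(0 <= i < size L) (if (i < k)%N then bidAt L k else 0)) +
  p * \sum_(t <- L) own_surplus (bidAt L k) t.
Proof.
move=> arr L_ge0; rewrite (big_nth tx0) -sumrB !mulr_sumr -big_split /=.
apply: ler_sum_nat => i /andP [_ lt_iL]; rewrite bidAt_nth //.
apply: slot_util_le => [lt_ik | le_ki]; rewrite -bidAt_nth //.
  exact: (arrangement_bidAt_le arr L_ge0 _ _ (ltnW lt_ik)).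
exact: (arrangement_bidAt_le arr L_ge0 _ _ le_ki).
Qed.

Lemma sum_slot_worth_le {vs os bs fs I L I' L' rest' x} :
  all_nonneg R vs -> all_nonneg R os -> size bs = size vs ->
  honest_inclusion R (k + k') (truthful_txs vs os) I -> arrangement R I L ->
  perm_eq (I' ++ rest') (others_txs R os ++ player_txs R vs bs fs) -> perm_eq L' I' ->
  0 <= x ->
  \sum_(0 <= i < size L') (if (i < k + k')%N then Num.min x (worth (nth tx0 L' i)) else 0)
  <= \sum_(0 <= i < size L') (if (i < k)%N then x else 0) +
     \sum_(k <= j < k + k') Num.min x (bidAt L j).
Proof.
move=> vs_ge0 os_ge0 eq_sz incl arr perm_av' perm_L' x_ge0.
have min_ge0 j : 0 <= Num.min x (bidAt L j).
  have [rest [perm_av _]] := incl; rewrite le_min x_ge0 bidAt_ge0 // => t.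
  by move=> /(arrangement_mem arr perm_av) /(truthful_txsP vs_ge0 os_ge0) [].
rewrite !sum_nat_cond_minn.
apply: le_trans (sum_top_worth_le vs_ge0 os_ge0 eq_sz incl arr perm_av' perm_L' x_ge0
                   (geq_minl _ _) (geq_minr _ _)) _.
have le_minn : (minn (size L') k <= minn (size L') (k + k'))%N.
  by rewrite leq_min geq_minl (leq_trans (geq_minr _ _) (leq_addr _ _)).
rewrite (big_cat_nat (leq0n _) le_minn) /=; apply: lerD.
  by apply: ler_sum => j _; rewrite ge_min lexx.
case: (leqP (size L') k) => [le_nk | lt_kn].
  by rewrite big_geq ?geq_minl //; apply: sumr_ge0 => j _.
have le_kM : (k <= minn (size L') (k + k'))%N by rewrite leq_min (ltnW lt_kn) leq_addr.
rewrite [X in _ <= X](big_cat_nat le_kM (geq_minr _ _)) /= lerDl.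
by apply: sumr_ge0 => j _.
Qed.

Hypothesis conf_prob_c_le : p * c%:R <= g.

Lemma coalition_deviation_le vs os bs fs I L I' L' :
  (size vs <= c)%N -> all_nonneg R vs -> all_nonneg R os -> all_nonneg R bs ->
  all_nonneg R fs -> size bs = size vs ->
  honest_inclusion R (k + k') (truthful_txs vs os) I -> arrangement R I L ->
  valid_block R (k + k') (others_txs R os ++ player_txs R vs bs fs) I' ->
  arrangement R I' L' ->
  exp_util R true c k k' g L' <= exp_util R true c k k' g L.
Proof.
move=> le_vs_c vs_ge0 os_ge0 bs_ge0 fs_ge0 eq_sz incl arr [rest' [perm_av' _]] arr'.
have [perm_L' _] := arr'.
have L'_ge0 : {in L', forall t, 0 <= bidOf t}.
  by move=> t /(arrangement_mem arr' perm_av'); exact: deviation_bid_ge0.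
have p_ge0 := conf_prob_ge0 R c k g.
set x := bidAt L' k; set X := bidAt L k; set D := Num.max (X - x) 0.
have x_ge0 : 0 <= x by exact: bidAt_ge0.
have D_ge0 : 0 <= D by rewrite le_max lexx orbT.
rewrite (exp_util_honest true vs_ge0 os_ge0 incl arr) exp_utilE //=.
rewrite (sum_nat_window _ k (k + k') (size L')) => [|i le_L'i]; last first.
  by rewrite bidAt_default.
rewrite mulr_sumr -big_split /=.
have slots_le := sum_slot_util_le arr' L'_ge0.
have revenue_le :
    \sum_(0 <= i < size L') (if (i < k + k')%N then Num.min x (worth (nth tx0 L' i)) else 0) -
    \sum_(0 <= i < size L') (if (i < k)%N then x else 0) <=
    \sum_(k <= j < k + k') bidAt L j - D.
  rewrite lerBlDl; apply: le_trans (sum_slot_worth_le vs_ge0 os_ge0 eq_sz incl arr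
                                      perm_av' perm_L' x_ge0) _.
  by rewrite lerD2l sum_min_le_shift // -{1}[k]addn0 ltn_add2l.
have surplus_le : \sum_(t <- L') own_surplus x t <=
                  \sum_(v <- vs) Num.max (v - X) 0 + c%:R * D.
  rewrite (perm_big _ perm_L').
  apply: le_trans (ler_sum_perm_cat _ perm_av' (fun t _ => own_surplus_ge0 _ _)) _.
  rewrite sum_own_surplus_deviation //.
  apply: le_trans (ler_sum _ (fun v _ => max_subr_le v x X)) _.
  rewrite big_split /= lerD2l big_const_seq count_predT iter_addr_0 -[_ *+ _]mulr_natl.
  by apply: ler_wpM2r; rewrite // ler_nat.
have := ler_wpM2l g_ge0 revenue_le; have := ler_wpM2l p_ge0 surplus_le.
have : p * (c%:R * D) <= g * D by rewrite mulrA; exact: ler_wpM2r.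
move: slots_le; lra.
Qed.

End Incentives.

Theorem mainTheorem3 (R : realType) (B c k k' : nat) (g : R) :
  (1 <= c)%N -> 0 < g -> g <= 1 -> (0 < k)%N -> (0 < k')%N -> (k + k')%N = B ->
  (k' <= nconf R c k g)%N ->
  UIC R B c k k' g /\ MIC R B c k k' g /\ SCP R B c k k' g.
Proof.
move=> c_ge1 g_gt0 g_le1 k_gt0 k'_gt0 <- _.
have g_ge0 := ltW g_gt0.
have m_le_k := nconf_le_k k c_ge1 g_ge0 g_le1.
have single := single_user_deviation_le k_gt0 k'_gt0 m_le_k g_ge0.
have coalition := coalition_deviation_le k_gt0 k'_gt0 m_le_k g_ge0 g_le1
                    (conf_prob_mulr_le c_ge1 k_gt0 g_ge0).
split; [|split].
- move=> os v b fs os_ge0 v_ge0 b_ge0 fs_ge0 I L I' L'.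
  exact: (single os v b fs I L I' L' os_ge0 v_ge0 b_ge0 fs_ge0).
- move=> os fs os_ge0 fs_ge0 I L I' L'.
  have no_users : truthful_txs [::] os = others_txs R os by rewrite /truthful_txs cats0.
  have nil_ge0 : all_nonneg R [::] by move=> z; rewrite in_nil.
  rewrite -{1}no_users.
  exact: (coalition [::] os [::] fs I L I' L'
            (leq0n c) nil_ge0 os_ge0 nil_ge0 fs_ge0 erefl).
- move=> vs os bs fs /andP [_ le_vs_c] vs_ge0 os_ge0 eq_sz bs_ge0 fs_ge0 I L I' L'.
  exact: (coalition vs os bs fs I L I' L' le_vs_c vs_ge0 os_ge0 bs_ge0 fs_ge0 eq_sz).
Qed.
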